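(* Fix $k\in\mathbb Z^+$ and let $0<\varepsilon_1<0.001$. There exists $\varepsilon_0=\varepsilon_0(k,\varepsilon_1)$ with $0<\varepsilon_0<\varepsilon_1$ such that, for any population protocol $P$ with $k$ states and any configuration $z_0$, there exists $\varepsilon=\varepsilon(P,z_0)\in[\varepsilon_0,\varepsilon_1]$ such that for every rule $j$ of $P$ exactly one of the following holds: (i) for all $z\in B_{n^{\varepsilon_0}}(z_0)$, $p_j(z)\le n^{\varepsilon-1}$; (ii) for all $z\in B_{n^{\varepsilon_0}}(z_0)$, $p_j(z)\ge n^{24\varepsilon-1}$; and for every state $i\in\{1,\dots,k\}$ exactly one of the following holds: (iii) for all $z\in B_{n^{\varepsilon_0}}(z_0)$, $z^{(i)}\le n^{\varepsilon}$; (iv) for all $z\in B_{n^{\varepsilon_0}}(z_0)$, $z^{(i)}\ge n^{24\varepsilon}$.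
   Context: Population protocol with states $\{1,\dots,k\}$ on $n$ agents: in each step the scheduler picks an unordered pair of distinct agents uniformly at random; the protocol has rules $j=1,\dots,r$ (with $r\le k^4$) of the form $\{i_1(j),i_2(j)\}\to\{o_1(j),o_2(j)\}$, rule $j$ being executed with probability $q_j$ when the selected pair has states $\{i_1(j),i_2(j)\}$ (rule probabilities may depend on $n$). A configuration is $z=(z^{(1)},\dots,z^{(k)})\in\{0,\dots,n\}^k$ with $\sum_i z^{(i)}=n$, $z^{(i)}$ the number of agents in state $i$. $p_j(z)$ denotes the probability that rule $j$ is the next rule executed in configuration $z$ (so $p_j(z)=q_j\frac{z^{(i_1(j))}z^{(i_2(j))}}{n^2}(1-O(1/n))$). For $d>0$, the $d$-box around $z_0$ is $B_d(z_0)=\{z:\ z_0^{(i)}/d\le z^{(i)}\le d\max\{1,z_0^{(i)}\}\text{ for all }1\le i\le k\}$. *)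

From Stdlib Require Import Reals Lra Lia Arith Bool.
Open Scope R_scope.

Fixpoint sumR (m : nat) (f : nat -> R) : R :=
  match m with
  | O => 0
  | S m' => sumR m' f + f m'
  end.

Fixpoint sumN (m : nat) (f : nat -> nat) : nat :=
  match m with
  | O => 0%nat
  | S m' => (sumN m' f + f m')%nat
  end.

Definition same_upair (a b c d : nat) : bool :=
  ((a =? c) && (b =? d)) || ((a =? d) && (b =? c)).

(* A population protocol with k states {0,...,k-1}; rule j (j < nrules) is
   {in1 j, in2 j} -> {out1 j, out2 j}, executed with probability q j when the
   selected pair has states {in1 j, in2 j}.  The q j may be arbitrary
   (in particular they may depend on n, since a protocol is chosen per n).
   For every unordered pair of states, the probabilities of the rules with
   that input pair sum to at most 1 (they are mutually exclusive events). *)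
Record protocol (k : nat) := Protocol {
  nrules : nat;
  in1 : nat -> nat;
  in2 : nat -> nat;
  out1 : nat -> nat;
  out2 : nat -> nat;
  q : nat -> R;
  nrules_le : (nrules <= k ^ 4)%nat;
  rules_in_range : forall j, (j < nrules)%nat ->
     (in1 j < k /\ in2 j < k /\ out1 j < k /\ out2 j < k)%nat;
  q_range : forall j, (j < nrules)%nat -> 0 <= q j <= 1;
  q_sum : forall a b, (a < k)%nat -> (b < k)%nat ->
     sumR nrules (fun j => if same_upair (in1 j) (in2 j) a b then q j else 0) <= 1
}.
Arguments nrules {k}.
Arguments in1 {k}.
Arguments in2 {k}.
Arguments out1 {k}.
Arguments out2 {k}.
Arguments q {k}.

(* z is a configuration of n agents over k states: z i = number of agents in
   state i (only the values z 0, ..., z (k-1) are meaningful). *)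
Definition config (k n : nat) (z : nat -> nat) : Prop :=
  sumN k z = n.

Definition npairs (z : nat -> nat) (a b : nat) : R :=
  if a =? b then INR (z a) * (INR (z a) - 1) / 2 else INR (z a) * INR (z b).

(* p_j(z): probability that rule j is the rule executed in the next step from
   configuration z of n agents: an unordered pair of distinct agents is chosen
   uniformly among the n(n-1)/2 pairs, and rule j fires with probability q j
   if the pair has states {in1 j, in2 j}. *)
Definition prule {k : nat} (P : protocol k) (n : nat) (j : nat) (z : nat -> nat) : R :=
  q P j * npairs z (in1 P j) (in2 P j) / (INR n * (INR n - 1) / 2).

Definition box (k n : nat) (d : R) (z0 z : nat -> nat) : Prop :=
  config k n z /\
  forall i, (i < k)%nat ->
    INR (z0 i) / d <= INR (z i) <= d * Rmax 1 (INR (z0 i)).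

Definition exactly_one (A B : Prop) : Prop := (A /\ ~ B) \/ (~ A /\ B).

From Stdlib Require Import Reals Lra Lia List Classical.
Open Scope R_scope.

(* On the box around z0, each state count z^(i) and each scaled rule
   probability n p_j(z) is bounded by an explicit U depending only on z0, and
   either U <= n^(6 eps0) or U is within the factor n^(6 eps0) of the true value
   everywhere on the box.  Writing max(U, 1) = n^v, the dichotomy at scale eps
   then holds as soon as v avoids the gap (eps, 24 eps + 6 eps0).  The
   candidate scales eps1 / 25^t, t = 0..M with M = k + k^4, have pairwise
   disjoint gaps once eps0 = eps1 / (6 * 25^(M+1)), so the at most M exponents v
   leave the gap of some candidate empty. *)

Lemma hit_indices_cover {A : Type} (bad : nat -> A -> Prop) (l : list A) :
  (forall v t s, bad t v -> bad s v -> t = s) ->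
  exists T : list nat, (length T <= length l)%nat /\
    forall t v, In v l -> bad t v -> In t T.
Proof.
  intros Huniq. induction l as [|v l [T [HT Hcover]]].
  - exists nil. split; [simpl; lia | intros t v []].
  - destruct (classic (exists t, bad t v)) as [[t Ht] | Hnone].
    + exists (t :: T). split; [simpl; lia |].
      intros s w [<- | Hw] Hs; [left; exact (Huniq _ _ _ Ht Hs) | right; eauto].
    + exists T. split; [simpl; lia |].
      intros s w [<- | Hw] Hs; [exfalso; eauto | eauto].
Qed.

Lemma exists_index_avoiding {A : Type} (bad : nat -> A -> Prop) (m : nat) (l : list A) :
  (forall v t s, bad t v -> bad s v -> t = s) -> (length l <= m)%nat ->
  exists t, (t <= m)%nat /\ forall v, In v l -> ~ bad t v.
Proof.
  intros Huniq Hl.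
  destruct (hit_indices_cover bad l Huniq) as [T [HT Hcover]].
  apply NNPP. intros Hall.
  assert (Hincl : incl (seq 0 (S m)) T).
  { intros t Ht. apply in_seq in Ht.
    apply NNPP. intros HtT. apply Hall. exists t. split; [lia |].
    intros v Hv Hbad. exact (HtT (Hcover t v Hv Hbad)). }
  pose proof (NoDup_incl_length (seq_NoDup (S m) 0) Hincl) as Hlen.
  rewrite length_seq in Hlen. lia.
Qed.

Lemma scale_decreasing (eps1 : R) (t s : nat) : 0 < eps1 -> (t <= s)%nat ->
  eps1 / 25 ^ s <= eps1 / 25 ^ t.
Proof.
  intros Heps Hts. apply Rmult_le_compat_l; [lra |].
  apply Rinv_le_contravar; [apply pow_lt; lra | apply Rle_pow; [lra | exact Hts]].
Qed.

Lemma scale_succ (eps1 : R) (t : nat) : eps1 / 25 ^ S t = eps1 / 25 ^ t / 25.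
Proof. simpl. field. apply pow_nonzero. lra. Qed.

Lemma exists_scale_avoiding_gaps (eps1 : R) (M : nat) (l : list R) :
  0 < eps1 -> (length l <= M)%nat ->
  exists eps, eps1 / 25 ^ M <= eps <= eps1 /\
    forall v, In v l -> v <= eps \/ 24 * eps + eps1 / 25 ^ S M <= v.
Proof.
  intros Heps Hl.
  set (e t := eps1 / 25 ^ t).
  set (in_gap t v := (t <= M)%nat /\ e t < v < 24 * e t + e (S M)).
  (* [24 e s + e (S M) <= 25 e (t + 1) = e t]: this is where the base 25 comes from. *)
  assert (Hgap_le : forall t s, (t < s)%nat -> (t <= M)%nat -> 24 * e s + e (S M) <= e t).
  { intros t s Hts HtM. unfold e.
    pose proof (scale_decreasing eps1 (S t) s Heps Hts).
    pose proof (scale_decreasing eps1 (S t) (S M) Heps ltac:(lia)).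
    rewrite (scale_succ eps1 t) in *. lra. }
  destruct (exists_index_avoiding in_gap M l) as [t [HtM Havoid]]; [| exact Hl |].
  - intros v t s [Ht Hvt] [Hs Hvs].
    destruct (Nat.lt_total t s) as [Hts | [Hts | Hst]]; [| exact Hts |].
    + pose proof (Hgap_le t s Hts Ht). lra.
    + pose proof (Hgap_le s t Hst Hs). lra.
  - exists (e t). split.
    + split; [apply scale_decreasing; [exact Heps | exact HtM] |].
      pose proof (scale_decreasing eps1 0 t Heps ltac:(lia)) as H0.
      unfold e. simpl in H0. lra.
    + intros v Hv. specialize (Havoid v Hv). unfold in_gap in Havoid.
      destruct (Rle_or_lt v (e t)) as [Hle | Hlt]; [left; exact Hle | right].
      destruct (Rle_or_lt (24 * e t + e (S M)) v) as [Hge | Hlt']; [exact Hge |].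
      exfalso. apply Havoid. auto.
Qed.

Lemma Rpower_Rlog_max (N U : R) : 1 < N -> Rpower N (Rlog N (Rmax U 1)) = Rmax U 1.
Proof.
  intros HN. apply Rpower_Rlog; [lra | lra |].
  pose proof (Rmax_r U 1). lra.
Qed.

Lemma Rpower_minus_one (N a : R) : 0 < N -> Rpower N (a - 1) = Rpower N a / N.
Proof. intros HN. unfold Rminus. now rewrite Rpower_plus, Rpower_Ropp, Rpower_1. Qed.

Lemma Rpower_pow_mult (x e : R) (m : nat) : 0 < x -> Rpower x e ^ m = Rpower x (INR m * e).
Proof.
  intros Hx. rewrite <- Rpower_pow by (unfold Rpower; apply exp_pos).
  now rewrite Rpower_mult, Rmult_comm.
Qed.

Lemma dichotomy_of_scale {A : Type} (N c eps U : R) (S : A -> Prop) (f : A -> R) :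
  1 < N -> 0 <= c -> 0 < eps ->
  Rlog N (Rmax U 1) <= eps \/ 24 * eps + c <= Rlog N (Rmax U 1) ->
  (forall z, S z -> f z <= U) ->
  U <= Rpower N c \/ (forall z, S z -> U <= f z * Rpower N c) ->
  (forall z, S z -> f z <= Rpower N eps) \/ (forall z, S z -> f z >= Rpower N (24 * eps)).
Proof.
  intros HN Hc Heps [Hlow | Hhigh] Hbound Hratio.
  - left. intros z Hz.
    apply (Rle_Rpower N) in Hlow; [| lra]. rewrite Rpower_Rlog_max in Hlow by exact HN.
    pose proof (Hbound z Hz). pose proof (Rmax_l U 1). lra.
  - right.
    apply (Rle_Rpower N) in Hhigh; [| lra].
    rewrite Rpower_Rlog_max, Rpower_plus in Hhigh by exact HN.
    assert (Hc1 : 1 <= Rpower N c).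
    { rewrite <- (Rpower_O N) by lra. apply Rle_Rpower; lra. }
    assert (Heps1 : 1 < Rpower N (24 * eps)).
    { rewrite <- (Rpower_O N) by lra. apply Rpower_lt; lra. }
    assert (HU : Rmax U 1 = U).
    { apply Rmax_left. destruct (Rle_dec U 1) as [HU1 | HU1]; [| lra].
      rewrite Rmax_right in Hhigh by exact HU1. nra. }
    rewrite HU in Hhigh.
    destruct Hratio as [Hsmall | Hratio]; [exfalso; nra |].
    intros z Hz. apply Rle_ge, (Rmult_le_reg_r (Rpower N c)); [lra |].
    specialize (Hratio z Hz). lra.
Qed.

Lemma exactly_one_of_bounds {A : Type} (S : A -> Prop) (f : A -> R) (z0 : A) (lo hi : R) :
  S z0 -> lo < hi ->
  (forall z, S z -> f z <= lo) \/ (forall z, S z -> f z >= hi) ->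
  exactly_one (forall z, S z -> f z <= lo) (forall z, S z -> f z >= hi).
Proof.
  intros Hz0 Hlt [Hlo | Hhi].
  - left. split; [exact Hlo |]. intros Hhi.
    specialize (Hlo z0 Hz0). specialize (Hhi z0 Hz0). lra.
  - right. split; [| exact Hhi]. intros Hlo.
    specialize (Hlo z0 Hz0). specialize (Hhi z0 Hz0). lra.
Qed.

Lemma eventually_large (e : R) : 0 < e ->
  exists n0 : nat, forall n, (n0 <= n)%nat -> 5 <= INR n /\ 2 <= Rpower (INR n) e.
Proof.
  intros He. destruct (INR_archimed 1 (Rpower 2 (/ e))) as [n1 Hn1]; [lra |].
  exists (Nat.max n1 5). intros n Hn. split.
  - replace 5 with (INR 5) by (simpl; ring). apply le_INR. lia.
  - assert (Hroot : Rpower 2 (/ e) <= INR n).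
    { apply Rle_trans with (INR n1); [lra | apply le_INR; lia]. }
    rewrite <- (Rpower_1 2) at 1 by lra.
    replace 1 with (/ e * e) at 1 by (field; lra). rewrite <- Rpower_mult.
    apply Rle_Rpower_l; [lra | split; [unfold Rpower; apply exp_pos | exact Hroot]].
Qed.

Lemma sumN_ge (k : nat) (z : nat -> nat) (i : nat) : (i < k)%nat -> (z i <= sumN k z)%nat.
Proof.
  induction k as [|k IH]; simpl; intros Hi; [lia |].
  destruct (Nat.eq_dec i k) as [-> | Hne]; [lia |]. specialize (IH ltac:(lia)). lia.
Qed.

Lemma scaled_le_of_div_le (d x0 x : R) : 1 <= d -> 0 <= x0 -> x0 / d <= x -> d * x0 <= d ^ 2 * x.
Proof.
  intros Hd Hx0 Hx. replace (d * x0) with (d ^ 2 * (x0 / d)) by (field; lra).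
  apply Rmult_le_compat_l; [nra | exact Hx].
Qed.

Lemma scaled_product_le (d x0 y0 x y : R) : 1 <= d -> 0 <= x0 -> 0 <= y0 ->
  x0 / d <= x -> y0 / d <= y -> d * x0 * (d * y0) <= x * y * d ^ 6.
Proof.
  intros Hd Hx0 Hy0 Hx Hy.
  pose proof (scaled_le_of_div_le d x0 x Hd Hx0 Hx) as Hsx.
  pose proof (scaled_le_of_div_le d y0 y Hd Hy0 Hy) as Hsy.
  assert (Hd2 : 1 <= d ^ 2) by nra.
  assert (Hd4 : 1 <= d ^ 4) by (replace (d ^ 4) with (d ^ 2 * d ^ 2) by ring; nra).
  assert (Hx_pos : 0 <= x) by nra. assert (Hy_pos : 0 <= y) by nra.
  apply Rle_trans with (d ^ 2 * x * (d ^ 2 * y)); [apply Rmult_le_compat; nra |].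
  replace (d ^ 2 * x * (d ^ 2 * y)) with (d ^ 4 * (x * y) * 1) by ring.
  replace (x * y * d ^ 6) with (d ^ 4 * (x * y) * d ^ 2) by ring.
  apply Rmult_le_compat_l; [apply Rmult_le_pos; nra | lra].
Qed.

Lemma scaled_square_le_pairs (d x0 x : R) : 2 <= d -> 2 * d <= x0 -> x0 / d <= x ->
  d * x0 * (d * x0) <= x * (x - 1) / 2 * d ^ 6.
Proof.
  intros Hd Hx0 Hx.
  pose proof (scaled_le_of_div_le d x0 x ltac:(lra) ltac:(nra) Hx) as Hsx.
  assert (Hx2 : 2 <= x).
  { apply Rle_trans with (x0 / d); [| exact Hx].
    apply Rmult_le_reg_r with d; [lra |]. replace (x0 / d * d) with x0 by (field; lra). lra. }
  assert (Hd2 : 4 <= d ^ 2) by nra.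
  assert (Hsq : d * x0 * (d * x0) <= d ^ 4 * (x * x)).
  { replace (d ^ 4 * (x * x)) with (d ^ 2 * x * (d ^ 2 * x)) by ring. apply Rmult_le_compat; nra. }
  assert (Hpairs : x * x <= d ^ 2 * (x * (x - 1) / 2)).
  { assert (0 <= x * (x - 1) / 2) by nra.
    apply Rle_trans with (4 * (x * (x - 1) / 2)); [nra | apply Rmult_le_compat_r; lra]. }
  replace (x * (x - 1) / 2 * d ^ 6) with (d ^ 4 * (d ^ 2 * (x * (x - 1) / 2))) by ring.
  assert (0 <= d ^ 4) by (apply pow_le; lra).
  apply Rle_trans with (1 := Hsq). apply Rmult_le_compat_l; lra.
Qed.

Section Box.

Variables (k n : nat) (P : protocol k) (z0 : nat -> nat) (d : R).
Hypothesis config_z0 : config k n z0.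
Hypothesis n_ge5 : 5 <= INR n.
Hypothesis d_ge2 : 2 <= d.

Local Notation N := (INR n).
Local Notation inbox z := (box k n d z0 z).

Lemma box_center : inbox z0.
Proof.
  split; [exact config_z0 |]. intros i _.
  pose proof (pos_INR (z0 i)). set (x := INR (z0 i)) in *.
  pose proof (Rmax_r 1 x). split; [| nra].
  apply Rmult_le_reg_l with d; [lra |].
  replace (d * (x / d)) with x by (field; lra). nra.
Qed.

Lemma center_le_N (i : nat) : (i < k)%nat -> INR (z0 i) <= N.
Proof. intros Hi. apply le_INR. rewrite <- config_z0. now apply sumN_ge. Qed.

Definition state_bound (i : nat) : R := d * Rmax 1 (INR (z0 i)).

Lemma state_le_bound (z : nat -> nat) (i : nat) :
  inbox z -> (i < k)%nat -> INR (z i) <= state_bound i.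
Proof. intros [_ Hz] Hi. apply (Hz i Hi). Qed.

Lemma state_bound_small_or_ratio (i : nat) : (i < k)%nat ->
  state_bound i <= d ^ 6 \/ forall z, inbox z -> state_bound i <= INR (z i) * d ^ 6.
Proof.
  intros Hi. unfold state_bound.
  assert (Hd26 : d ^ 2 <= d ^ 6) by (apply Rle_pow; [lra | lia]).
  destruct (Nat.eq_dec (z0 i) 0) as [Hzero | Hpos].
  - left. rewrite Hzero, Rmax_left by (simpl; lra).
    rewrite Rmult_1_r, <- pow_1 at 1. apply Rle_pow; [lra | lia].
  - right. intros z [_ Hz].
    assert (H1 : 1 <= INR (z0 i)) by (apply (le_INR 1); lia).
    rewrite Rmax_right by exact H1.
    destruct (Hz i Hi) as [Hlow _].
    pose proof (scaled_le_of_div_le d (INR (z0 i)) (INR (z i)) ltac:(lra) ltac:(lra) Hlow).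
    pose proof (pos_INR (z i)). nra.
Qed.

Definition pair_bound (a b : nat) : R := state_bound a * state_bound b.

Lemma npairs_le_pair_bound (z : nat -> nat) (a b : nat) :
  inbox z -> (a < k)%nat -> (b < k)%nat -> npairs z a b <= pair_bound a b.
Proof.
  intros Hz Ha Hb.
  pose proof (state_le_bound z a Hz Ha). pose proof (state_le_bound z b Hz Hb).
  pose proof (pos_INR (z a)). pose proof (pos_INR (z b)).
  assert (Hprod : INR (z a) * INR (z b) <= pair_bound a b) by (apply Rmult_le_compat; lra).
  unfold npairs. destruct (Nat.eqb_spec a b) as [<- | _]; nra.
Qed.

(* For [a = b] the pair count [x (x - 1) / 2] vanishes at [x = 1]; the ratio
   case therefore needs [z0 a >= 2 d], which keeps [z a >= 2] on the box. *)
Lemma pair_bound_small_or_ratio (a b : nat) : (a < k)%nat -> (b < k)%nat ->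
  pair_bound a b <= d ^ 4 * (N - 1) \/
  forall z, inbox z -> pair_bound a b <= npairs z a b * d ^ 6.
Proof.
  intros Ha Hb. unfold pair_bound, state_bound.
  assert (Hd2 : 4 <= d ^ 2) by nra.
  assert (Hd4 : 0 <= d ^ 4) by (apply pow_le; lra).
  pose proof (Rmax_l 1 (INR (z0 a))) as Hma. pose proof (Rmax_l 1 (INR (z0 b))) as Hmb.
  destruct (Nat.eqb_spec a b) as [<- | Hab].
  - destruct (Rle_dec (2 * d) (INR (z0 a))) as [Hbig | Hsmall].
    + right. intros z [_ Hz]. unfold npairs. rewrite Nat.eqb_refl, Rmax_right by lra.
      apply scaled_square_le_pairs; [lra | lra | apply (Hz a Ha)].
    + left. assert (Hdm : 0 <= d * Rmax 1 (INR (z0 a)) <= 2 * d ^ 2).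
      { split; [nra |]. replace (2 * d ^ 2) with (d * (2 * d)) by ring.
        apply Rmult_le_compat_l; [lra | apply Rmax_lub; lra]. }
      apply Rle_trans with (2 * d ^ 2 * (2 * d ^ 2)); [apply Rmult_le_compat; lra |].
      replace (2 * d ^ 2 * (2 * d ^ 2)) with (d ^ 4 * 4) by ring.
      apply Rmult_le_compat_l; lra.
  - assert (Hone : forall m, 1 <= m <= N -> d * 1 * (d * m) <= d ^ 4 * (N - 1)).
    { intros m Hm. replace (d * 1 * (d * m)) with (d ^ 2 * m) by ring.
      replace (d ^ 4 * (N - 1)) with (d ^ 2 * (d ^ 2 * (N - 1))) by ring.
      apply Rmult_le_compat_l; nra. }
    assert (HmaN : Rmax 1 (INR (z0 a)) <= N) by (apply Rmax_lub; [lra | now apply center_le_N]).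
    assert (HmbN : Rmax 1 (INR (z0 b)) <= N) by (apply Rmax_lub; [lra | now apply center_le_N]).
    destruct (Nat.eq_dec (z0 a) 0) as [Ha0 | Ha0]; [| destruct (Nat.eq_dec (z0 b) 0) as [Hb0 | Hb0]].
    + left. rewrite Ha0, (Rmax_left 1 (INR 0)) by (simpl; lra). apply Hone; lra.
    + left. rewrite Hb0, (Rmax_left 1 (INR 0)) by (simpl; lra).
      rewrite Rmult_comm. apply Hone; lra.
    + right. intros z [_ Hz]. unfold npairs.
      destruct (Nat.eqb_spec a b) as [Heq | _]; [contradiction |].
      assert (H1a : 1 <= INR (z0 a)) by (apply (le_INR 1); lia).
      assert (H1b : 1 <= INR (z0 b)) by (apply (le_INR 1); lia).
      rewrite !Rmax_right by assumption.
      apply scaled_product_le; [lra | lra | lra | apply (Hz a Ha) | apply (Hz b Hb)].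
Qed.

Definition rule_bound (j : nat) : R := 2 * q P j * pair_bound (in1 P j) (in2 P j) / (N - 1).

Lemma scaled_prule (z : nat -> nat) (j : nat) :
  N * prule P n j z = 2 * q P j * npairs z (in1 P j) (in2 P j) / (N - 1).
Proof. unfold prule. field. lra. Qed.

Lemma scaled_prule_le_bound (z : nat -> nat) (j : nat) :
  inbox z -> (j < nrules P)%nat -> N * prule P n j z <= rule_bound j.
Proof.
  intros Hz Hj. destruct (rules_in_range _ P j Hj) as [Ha [Hb _]].
  pose proof (q_range _ P j Hj) as Hq.
  rewrite scaled_prule. unfold rule_bound, Rdiv.
  apply Rmult_le_compat_r; [apply Rlt_le, Rinv_0_lt_compat; lra |].
  apply Rmult_le_compat_l; [lra |]. now apply npairs_le_pair_bound.
Qed.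

Lemma rule_bound_small_or_ratio (j : nat) : (j < nrules P)%nat ->
  rule_bound j <= d ^ 6 \/ forall z, inbox z -> rule_bound j <= N * prule P n j z * d ^ 6.
Proof.
  intros Hj. destruct (rules_in_range _ P j Hj) as [Ha [Hb _]].
  pose proof (q_range _ P j Hj) as Hq.
  assert (Hc : 0 <= 2 * q P j / (N - 1))
    by (apply Rmult_le_pos; [lra | apply Rlt_le, Rinv_0_lt_compat; lra]).
  unfold rule_bound. replace (2 * q P j * pair_bound (in1 P j) (in2 P j) / (N - 1))
    with (2 * q P j / (N - 1) * pair_bound (in1 P j) (in2 P j)) by (field; lra).
  destruct (pair_bound_small_or_ratio _ _ Ha Hb) as [Hsmall | Hratio].
  - left.
    apply Rle_trans with (2 * q P j / (N - 1) * (d ^ 4 * (N - 1))); [apply Rmult_le_compat_l; assumption |].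
    replace (2 * q P j / (N - 1) * (d ^ 4 * (N - 1))) with (2 * q P j * d ^ 4) by (field; lra).
    replace (d ^ 6) with (d ^ 2 * d ^ 4) by ring.
    assert (0 <= d ^ 4) by (apply pow_le; lra).
    apply Rmult_le_compat_r; nra.
  - right. intros z Hz. rewrite scaled_prule.
    replace (2 * q P j * npairs z (in1 P j) (in2 P j) / (N - 1) * d ^ 6)
      with (2 * q P j / (N - 1) * (npairs z (in1 P j) (in2 P j) * d ^ 6)) by (field; lra).
    apply Rmult_le_compat_l; [exact Hc | exact (Hratio z Hz)].
Qed.

Variables (c eps : R).
Hypothesis c_ge0 : 0 <= c.
Hypothesis d_pow6 : d ^ 6 = Rpower N c.
Hypothesis eps_gt0 : 0 < eps.

Lemma state_dichotomy (i : nat) : (i < k)%nat ->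
  Rlog N (Rmax (state_bound i) 1) <= eps \/ 24 * eps + c <= Rlog N (Rmax (state_bound i) 1) ->
  exactly_one (forall z, inbox z -> INR (z i) <= Rpower N eps)
              (forall z, inbox z -> INR (z i) >= Rpower N (24 * eps)).
Proof.
  intros Hi Hgap. apply exactly_one_of_bounds with z0; [exact box_center | apply Rpower_lt; lra |].
  apply dichotomy_of_scale with c (state_bound i); try assumption; [lra | |].
  - intros z Hz. now apply state_le_bound.
  - rewrite <- d_pow6. now apply state_bound_small_or_ratio.
Qed.

Lemma rule_dichotomy (j : nat) : (j < nrules P)%nat ->
  Rlog N (Rmax (rule_bound j) 1) <= eps \/ 24 * eps + c <= Rlog N (Rmax (rule_bound j) 1) ->
  exactly_one (forall z, inbox z -> prule P n j z <= Rpower N (eps - 1))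
              (forall z, inbox z -> prule P n j z >= Rpower N (24 * eps - 1)).
Proof.
  intros Hj Hgap.
  apply exactly_one_of_bounds with z0; [exact box_center | |].
  { rewrite !Rpower_minus_one by lra. apply Rmult_lt_compat_r.
    - apply Rinv_0_lt_compat. lra.
    - apply Rpower_lt; lra. }
  rewrite !Rpower_minus_one by lra.
  destruct (dichotomy_of_scale N c eps (rule_bound j) (fun z => inbox z) (fun z => N * prule P n j z))
    as [Hlow | Hhigh]; try assumption; [lra | | | left | right].
  - intros z Hz. now apply scaled_prule_le_bound.
  - rewrite <- d_pow6. now apply rule_bound_small_or_ratio.
  - intros z Hz. specialize (Hlow z Hz). apply Rmult_le_reg_l with N; [lra |].
    replace (N * (Rpower N eps / N)) with (Rpower N eps) by (field; lra). exact Hlow.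
  - intros z Hz. specialize (Hhigh z Hz). apply Rle_ge, Rmult_le_reg_l with N; [lra |].
    replace (N * (Rpower N (24 * eps) / N)) with (Rpower N (24 * eps)) by (field; lra). lra.
Qed.

End Box.

Theorem lemma26 (k : nat) (eps1 : R) :
  (1 <= k)%nat -> 0 < eps1 < 1 / 1000 ->
  exists eps0 : R, 0 < eps0 < eps1 /\
  exists n0 : nat, forall n : nat, (n0 <= n)%nat ->
  forall (P : protocol k) (z0 : nat -> nat), config k n z0 ->
  exists eps : R, eps0 <= eps <= eps1 /\
    (forall j, (j < nrules P)%nat ->
       exactly_one
         (forall z, box k n (Rpower (INR n) eps0) z0 z ->
            prule P n j z <= Rpower (INR n) (eps - 1))
         (forall z, box k n (Rpower (INR n) eps0) z0 z ->
            prule P n j z >= Rpower (INR n) (24 * eps - 1))) /\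
    (forall i, (i < k)%nat ->
       exactly_one
         (forall z, box k n (Rpower (INR n) eps0) z0 z ->
            INR (z i) <= Rpower (INR n) eps)
         (forall z, box k n (Rpower (INR n) eps0) z0 z ->
            INR (z i) >= Rpower (INR n) (24 * eps))).
Proof.
  intros _ [Heps1 _].
  set (M := (k + k ^ 4)%nat).
  set (c := eps1 / 25 ^ S M).
  assert (Hc : 0 < c <= eps1 / 25 ^ M / 25).
  { unfold c. rewrite scale_succ. split; [| lra].
    apply Rdiv_lt_0_compat; [apply Rdiv_lt_0_compat; [| apply pow_lt] |]; lra. }
  pose proof (scale_decreasing eps1 0 M Heps1 (Nat.le_0_l M)) as HM. simpl in HM.
  exists (c / 6). split; [lra |].
  destruct (eventually_large (c / 6)) as [n0 Hn0]; [lra |].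
  exists n0. intros n Hn P z0 Hz0. destruct (Hn0 n Hn) as [HN Hd].
  set (d := Rpower (INR n) (c / 6)) in *.
  assert (Hd6 : d ^ 6 = Rpower (INR n) c).
  { unfold d. rewrite Rpower_pow_mult by lra. f_equal. simpl. field. }
  set (l := map (fun i => Rlog (INR n) (Rmax (state_bound z0 d i) 1)) (seq 0 k)
         ++ map (fun j => Rlog (INR n) (Rmax (rule_bound k n P z0 d j) 1)) (seq 0 (nrules P))).
  destruct (exists_scale_avoiding_gaps eps1 M l Heps1) as [eps [Hrange Hgap]].
  { unfold l, M. rewrite length_app, !length_map, !length_seq. pose proof (nrules_le _ P). lia. }
  exists eps. split; [lra | split].
  - intros j Hj. apply (rule_dichotomy k n P z0 d Hz0 HN Hd c); [lra | exact Hd6 | lra | exact Hj |].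
    apply Hgap, in_or_app. right. apply in_map_iff. exists j. split; [reflexivity | apply in_seq; lia].
  - intros i Hi. apply (state_dichotomy k n z0 d Hz0 HN Hd c); [lra | exact Hd6 | lra | exact Hi |].
    apply Hgap, in_or_app. left. apply in_map_iff. exists i. split; [reflexivity | apply in_seq; lia].
Qed.
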